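(* For $d\ge2$ and an exponent $e\in\{1,\dots,d-1\}$, let $\varkappa^e\subset\mathfrak a$ be the Kostant line of $\mathfrak{sl}_d(\mathbb R)$ and $\sigma_j(a)=a_j-a_{j+1}$. Then $\sigma_j(\varkappa^e)=0$ in each of the following cases: (1) $d=2n$, $e$ even and $j=n$; (2) $j=2$, $e$ arbitrary and $d=1+e(e+1)/2$; (3) $(d,e,j)=(4m+3,2m+1,2m)$ for every integer $m\ge1$; (4) $e=3$ and $(d,j)^T=\begin{pmatrix}4&-5\\1&-1\end{pmatrix}^k\begin{pmatrix}7\\2\end{pmatrix}$ for any integer $k\ge0$; (5) $e=4$ and $(d,j)^T=\begin{pmatrix}6&-7\\1&-1\end{pmatrix}^k\begin{pmatrix}11\\2\end{pmatrix}$ or $(d,j)^T=\begin{pmatrix}6&-7\\1&-1\end{pmatrix}^k\begin{pmatrix}17\\3\end{pmatrix}$ for any integer $k\ge0$.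
   Context: $\mathfrak a=\{a\in\mathbb R^d:\sum_ia_i=0\}$ is the space of traceless diagonal matrices. Let $H=\mathrm{diag}(d-1,d-3,\dots,1-d)$, $E=\sum_{i=1}^{d-1}E_{i,i+1}$ and $F=\sum_{i=1}^{d-1}i(d-i)E_{i+1,i}$ (where $E_{k,l}$ is the elementary matrix with $1$ in entry $(k,l)$); they span a principal $\mathfrak{sl}_2$, $\mathfrak s$. Under $\mathrm{ad}\,\mathfrak s$, $\mathfrak{sl}_d(\mathbb R)=\bigoplus_{e=1}^{d-1}V_e$ with $V_e$ irreducible of dimension $2e+1$, and the Kostant line is $\varkappa^e=V_e\cap\mathfrak a$ (spanned by $(\mathrm{ad}F)^e(E^e)$, $E^e$ the $e$-th matrix power). *)

From HB Require Import structures.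
From mathcomp Require Import all_boot all_order all_algebra.
From mathcomp Require Import reals.
Set Implicit Arguments. Unset Strict Implicit. Unset Printing Implicit Defensive.
Import Order.TTheory GRing.Theory Num.Theory.
Local Open Scope ring_scope.

Section Kostant.
Variable R : realType.
Variable d : nat.

Definition prinE : 'M[R]_d := \matrix_(r, c) (if (c : nat) == r.+1 then 1 else 0).

(* F = sum_{i=1}^{d-1} i(d-i) E_{i+1,i}  (0-indexed: entry (k+1, k) is (k+1)(d-k-1)) *)
Definition prinF : 'M[R]_d :=
  \matrix_(r, c) (if (r : nat) == c.+1 then ((c.+1 * (d - c.+1))%N)%:R else 0).

Definition prinH : 'M[R]_d :=
  \matrix_(r, c) (if r == c then (d%:R - 1) - 2 * (r : nat)%:R else 0).

Definition adF (X : 'M[R]_d) : 'M[R]_d := prinF *m X - X *m prinF.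

Fixpoint mxpow (A : 'M[R]_d) (e : nat) : 'M[R]_d :=
  if e is e'.+1 then A *m mxpow A e' else 1%:M.

Definition kostant_gen (e : nat) : 'M[R]_d := iter e adF (mxpow prinE e).

Definition kostant_line (e : nat) : 'M[R]_d -> Prop :=
  fun a => exists c : R, a = c *: kostant_gen e.

(* a_i, 1-indexed diagonal entry *)
Definition diag_at (A : 'M[R]_d) (i : nat) : R :=
  match (insub i.-1 : option 'I_d) with Some k => A k k | None => 0 end.

Definition sigma (j : nat) (A : 'M[R]_d) : R := diag_at A j - diag_at A j.+1.

End Kostant.

Definition mx22 (a b c e : int) : 'M[int]_2 :=
  \matrix_(r, s) (if (r : nat) == 0%N then (if (s : nat) == 0%N then a else b)
                  else (if (s : nat) == 0%N then c else e)).

Definition col2 (a b : int) : 'cV[int]_2 :=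
  \col_r (if (r : nat) == 0%N then a else b).

Definition orbit_pt (M : 'M[int]_2) (k : nat) (d0 j0 : int) (d j : nat) : Prop :=
  let v := (M ^+ k) *m col2 d0 j0 in
  v ord0 ord0 = (d : int) /\ v ord_max ord0 = (j : int).

From mathcomp Require Import all_boot all_order all_algebra.
From mathcomp Require Import reals.
From mathcomp Require Import zify ring lra.
Set Implicit Arguments. Unset Strict Implicit. Unset Printing Implicit Defensive.
Import GRing.Theory Num.Theory.
Local Open Scope ring_scope.

(* Let w = (ad F)^e (E^e) span the Kostant line and let y_0, ..., y_(d-1) be its diagonal, so that
   sigma_j vanishes on the line iff y_(j-1) = y_j.  As E^e has weight 2e, w is the zero-weight
   vector of the sl_2-string of E^e, and the Casimir relation for w becomes a three-term recurrence
   for y with eigenvalue e(e+1), whose solutions are determined by y_0.  The anti-transpose is an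
   anti-automorphism fixing E and F, whence y_(d-1-i) = (-1)^e y_i.  Case (1) is this symmetry;
   in case (3) it kills the middle entry and one step of the recurrence concludes; case (2) is the
   first two steps of the recurrence.  For e = 3, 4 the recurrence is solved by discrete Chebyshev
   polynomials P, and P(j-1) = P(j) becomes a Pell-type equation in (d, j); the given matrices
   are automorphs of the corresponding binary quadratic forms. *)

Section Bracket.
Variables (R : comPzRingType) (A : algType R).
Implicit Types (a : R) (x y z : A).

Definition ad x y := x * y - y * x.

Lemma adZ x a y : ad x (a *: y) = a *: ad x y.
Proof. by rewrite /ad -scalerAl -scalerAr scalerBr. Qed.

Lemma adZl a x y : ad (a *: x) y = a *: ad x y.
Proof. by rewrite /ad -scalerAl -scalerAr scalerBr. Qed.

Lemma adB x y z : ad x (y - z) = ad x y - ad x z.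
Proof.
by rewrite /ad mulrBr mulrBl opprB addrACA [in RHS]opprB [in RHS]addrACA [- _ - _]addrC.
Qed.

Lemma ad_mul x y z : ad x (y * z) = ad x y * z + y * ad x z.
Proof. by rewrite /ad mulrBl mulrBr !mulrA addrA subrK. Qed.

Lemma ad_ad x y z : ad x (ad y z) = ad (ad x y) z + ad y (ad x z).
Proof.
by rewrite -[ad y z]/(y * z - z * y) adB !ad_mul opprD [- _ + - _]addrC addrACA.
Qed.

Lemma ad_exp x y a k : ad x y = a *: y -> ad x (y ^+ k) = (a * k%:R) *: y ^+ k.
Proof.
move=> xy; elim: k => [|k IH]; first by rewrite /ad expr0 mulr1 mul1r subrr mulr0 scale0r.
rewrite exprS ad_mul IH xy -scalerAl -scalerAr -exprS -scalerDl.
by rewrite -natr1 mulrDr mulr1 addrC.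
Qed.

Lemma ad_exp_self x k : ad x (x ^+ k) = 0.
Proof. by rewrite /ad -exprS -exprSr subrr. Qed.

Section Sl2String.
Variables e f h : A.
Hypotheses (ad_ef : ad e f = h) (ad_he : ad h e = 2 *: e) (ad_hf : ad h f = (-2) *: f).

Definition fstring m k := iter k (ad f) (e ^+ m).

Lemma ad_h_fstring m k : ad h (fstring m k) = (2 * (m%:R - k%:R)) *: fstring m k.
Proof.
elim: k => [|k IH]; first by rewrite /= subr0; exact: ad_exp.
rewrite /= ad_ad ad_hf adZl IH adZ -scalerDl -natr1; congr (_ *: _); ring.
Qed.

Lemma ad_e_fstring m k :
  ad e (fstring m k) = (k%:R * (2 * m%:R + 1 - k%:R)) *: fstring m k.-1.
Proof.
elim: k => [|k IH]; first by rewrite ad_exp_self mul0r scale0r.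
rewrite /= ad_ad ad_ef ad_h_fstring IH adZ.
case: k IH => [|k] _ /=; first by rewrite mul0r scale0r addr0; congr (_ *: _); ring.
rewrite -scalerDl -!natr1; congr (_ *: _); ring.
Qed.

Lemma casimir_fstring m :
  ad e (ad f (fstring m m)) + ad f (ad e (fstring m m)) = (2 * (m%:R * (m%:R + 1))) *: fstring m m.
Proof.
rewrite -[ad f (fstring m m)]/(fstring m m.+1) !ad_e_fstring adZ.
case: m => [|k] /=; first by rewrite mul0r scale0r addr0; congr (_ *: _); ring.
rewrite -scalerDl -!natr1; congr (_ *: _); ring.
Qed.

Section AntiAutomorphism.
Variable tau : A -> A.
Hypotheses (tau1 : tau 1 = 1) (tauB : {morph tau : x y / x - y}).
Hypotheses (tauM : forall x y, tau (x * y) = tau y * tau x) (tau_e : tau e = e) (tau_f : tau f = f).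

Lemma tau_ad_f x : tau (ad f x) = - ad f (tau x).
Proof. by rewrite /ad tauB !tauM tau_f opprB. Qed.

Lemma tau_fstring m k : tau (fstring m k) = (-1) ^+ k *: fstring m k.
Proof.
elim: k => [|k IH] /=; last by rewrite tau_ad_f IH adZ exprS mulN1r scaleNr.
rewrite scale1r; elim: m => [|m IH]; first by rewrite expr0 tau1.
by rewrite [in LHS]exprSr tauM IH tau_e -exprS.
Qed.
End AntiAutomorphism.
End Sl2String.
End Bracket.

Section CasimirRecurrence.
Variables (R : realFieldType) (n : nat) (c : R).

(* Diagonal entries of the Casimir relation [E, [F, w]] + [F, [E, w]] = 2 c w for the principal
   pair (E, F) of sl_(n+1). *)
Definition casimir_rec (y : nat -> R) := forall i, (i < n)%N ->
  (i%:R + 1) * (n%:R - i%:R) * (y i - y i.+1) - i%:R * (n%:R + 1 - i%:R) * (y i.-1 - y i)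
  = c * y i.

Definition casimir_recR (P : R -> R) := forall x,
  (x + 1) * (n%:R - x) * (P x - P (x + 1)) - x * (n%:R + 1 - x) * (P (x - 1) - P x) = c * P x.

Lemma casimir_rec_lincomb a b y p : casimir_rec y -> casimir_rec p ->
  casimir_rec (fun i => a * y i - b * p i).
Proof.
move=> ry rp i lt_in; have := congr2 (fun u v => a * u - b * v) (ry i lt_in) (rp i lt_in).
by move=> /= eq_ab; apply: etrans (etrans eq_ab _); ring.
Qed.

Lemma casimir_rec_eq0 z : casimir_rec z -> z 0%N = 0 -> forall i, (i <= n)%N -> z i = 0.
Proof.
move=> rz z0.
suff zz i : (i < n)%N -> z i = 0 /\ z i.+1 = 0 by case=> [//|i] /zz[].
elim: i => [|i IH] lt_in.
  split=> //; have := rz 0%N lt_in; rewrite /= z0 => rz0.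
  have : n%:R * z 1%N = 0 by lra.
  by move/eqP; rewrite mulf_eq0 pnatr_eq0 eqn0Ngt lt_in => /eqP.
have [zi zi1] := IH (ltnW lt_in); split=> //.
have := rz i.+1 lt_in; rewrite /= zi zi1 => rzi.
have : ((i.+2 * (n - i.+1))%:R : R) * z i.+2 = 0.
  by rewrite natrM (natrB _ (ltnW lt_in)); rewrite -!natr1 in rzi *; lra.
by move/eqP; rewrite mulf_eq0 pnatr_eq0 muln_eq0 subn_eq0 leqNgt lt_in => /eqP.
Qed.

Lemma casimir_rec_prop y p : casimir_rec y -> casimir_rec p ->
  forall i, (i <= n)%N -> p 0%N * y i = y 0%N * p i.
Proof.
move=> ry rp i le_in; apply/eqP; rewrite -subr_eq0; apply/eqP.
apply: (casimir_rec_eq0 (casimir_rec_lincomb (p 0%N) (y 0%N) ry rp)) le_in.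
by rewrite mulrC subrr.
Qed.

Lemma casimir_rec_poly (P : R -> R) : casimir_recR P -> casimir_rec (fun k => P k%:R).
Proof.
move=> Peq i _; case: i => [|i] /=; first by have := Peq 0; rewrite !mul0r !subr0 add0r.
have Pi1 : (i.+1%:R - 1 : R) = i%:R by rewrite -natr1 addrK.
by have := Peq i.+1%:R; rewrite Pi1 -(@natr1 R i.+1).
Qed.

Lemma casimir_rec_step_poly y (P : R -> R) a :
  casimir_recR P -> casimir_rec y -> P 0 != 0 -> (a < n)%N -> P a%:R = P a.+1%:R -> y a = y a.+1.
Proof.
move=> Peq ry P0 lt_an Pa; have yP := casimir_rec_prop ry (casimir_rec_poly Peq).
by apply: (mulfI P0); rewrite (yP a (ltnW lt_an)) (yP a.+1 lt_an) /= Pa.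
Qed.

End CasimirRecurrence.

Lemma casimir_rec_y1_y2 (R : realFieldType) n (y : nat -> R) :
  (2 <= n)%N -> casimir_rec n (2 * n%:R) y -> y 1%N = y 2%N.
Proof.
move=> le2n ry; have := ry 0%N (ltnW le2n); have := ry 1%N le2n; rewrite /= => ry1 ry0.
have : (n.-1%:R : R) * (y 1%N - y 2%N) = 0 by rewrite -subn1 natrB 1?ltnW //; lra.
by move/eqP; rewrite mulf_eq0 pnatr_eq0 subr_eq0 -subn1 subn_eq0 leqNgt le2n => /eqP.
Qed.

Lemma casimir_rec_mid (R : realFieldType) i (y : nat -> R) :
  casimir_rec (2 * i + 4) (i.+2%:R * i.+3%:R) y -> y i.+2 = 0 -> y i = y i.+1.
Proof.
move=> ry y2; have := ry i.+1 ltac:(lia); rewrite /= y2 => ryi.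
have : ((i.+1 * i.+4)%:R : R) * (y i - y i.+1) = 0.
  by rewrite natrM; rewrite natrD natrM -!natr1 in ryi *; lra.
by move/eqP; rewrite mulf_eq0 pnatr_eq0 subr_eq0 => /eqP.
Qed.

Section DiscreteChebyshev.
Variables (R : realFieldType) (n : nat).
Local Notation N := (n%:R + 1 : R).

(* Discrete Chebyshev (Gram) polynomials of degrees 3 and 4 on the nodes 0, ..., n, written in the
   centred variable w = 2 x - n. *)
Definition dcheb3 (x : R) : R := let w := 2 * x - n%:R in 5 * w ^+ 3 - (3 * N ^+ 2 - 7) * w.

Definition dcheb4 (x : R) : R :=
  let w := 2 * x - n%:R in
  35 * w ^+ 4 - 10 * (3 * N ^+ 2 - 13) * w ^+ 2 + 3 * (N ^+ 2 - 1) * (N ^+ 2 - 9).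

Lemma dcheb3_rec : casimir_recR n (3%:R * (3%:R + 1)) dcheb3.
Proof. by move=> x; rewrite /dcheb3; ring. Qed.

Lemma dcheb4_rec : casimir_recR n (4%:R * (4%:R + 1)) dcheb4.
Proof. by move=> x; rewrite /dcheb4; ring. Qed.

Lemma dcheb3_0_neq0 : (3 <= n)%N -> dcheb3 0 != 0.
Proof.
move=> le3n; rewrite (_ : dcheb3 0 = - (2 * n * (n - 1) * (n - 2))%:R).
  by rewrite oppr_eq0 pnatr_eq0 !muln_eq0; lia.
by rewrite /dcheb3 !natrM !natrB; try lia; ring.
Qed.

Lemma dcheb4_0_neq0 : (4 <= n)%N -> dcheb4 0 != 0.
Proof.
move=> le4n; rewrite (_ : dcheb4 0 = (8 * n * (n - 1) * (n - 2) * (n - 3))%:R).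
  by rewrite pnatr_eq0 !muln_eq0; lia.
by rewrite /dcheb4 !natrM !natrB; try lia; ring.
Qed.

Lemma dcheb3_step x : dcheb3 (x - 1) - dcheb3 x = 6 * (N ^+ 2 - 5 * (N - 2 * x) ^+ 2 - 4).
Proof. rewrite /dcheb3; ring. Qed.

Lemma dcheb4_step x :
  dcheb4 (x - 1) - dcheb4 x = 40 * (2 * x - N) * (3 * N ^+ 2 - 7 * (N - 2 * x) ^+ 2 - 20).
Proof. rewrite /dcheb4; ring. Qed.

End DiscreteChebyshev.

Definition qform_e3 (x y : int) : int := x * x - 5 * ((x - 2 * y) * (x - 2 * y)).
Definition qform_e4 (x y : int) : int := 3 * x * x - 7 * ((x - 2 * y) * (x - 2 * y)).

Lemma qform_e3_invariant x y : qform_e3 (4 * x + (-5) * y) (1 * x + (-1) * y) = qform_e3 x y.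
Proof. rewrite /qform_e3; ring. Qed.

Lemma qform_e4_invariant x y : qform_e4 (6 * x + (-7) * y) (1 * x + (-1) * y) = qform_e4 x y.
Proof. rewrite /qform_e4; ring. Qed.

Lemma orbit_pt_invariant (Q : int -> int -> int) a b c e k d0 j0 d j :
  (forall x y, Q (a * x + b * y) (c * x + e * y) = Q x y) ->
  orbit_pt (mx22 a b c e) k d0 j0 d j -> Q d j = Q d0 j0.
Proof.
move=> Qinv [<- <-]; elim: k => [|k IH]; first by rewrite expr0 mul1mx !mxE.
rewrite exprS -mulmxE -mulmxA; move: IH; set v := _ *m col2 d0 j0 => IH; clearbody v.
rewrite !mxE !big_ord_recl !big_ord0 !mxE /= !addr0.
have -> : lift ord0 ord0 = ord_max :> 'I_2 by apply: val_inj.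
by rewrite Qinv.
Qed.

Lemma sigmaZ (R : realType) d j c (A : 'M[R]_d) : sigma j (c *: A) = c * sigma j A.
Proof.
rewrite /sigma /diag_at mulrBr.
by do 2 case: insub => [?|]; rewrite ?mxE ?mulr0 ?subr0 ?sub0r ?mulrN.
Qed.

Section MatrixEntries.
Variables (R : pzRingType) (m p : nat).
Implicit Types X Y : 'M[R]_(m, p).

Lemma entryD X Y i j : (X + Y) i j = X i j + Y i j. Proof. by rewrite !mxE. Qed.
Lemma entryN X i j : (- X) i j = - X i j. Proof. by rewrite !mxE. Qed.
Lemma entryB X Y i j : (X - Y) i j = X i j - Y i j. Proof. by rewrite !mxE. Qed.
Lemma entryZ a X i j : (a *: X) i j = a * X i j. Proof. by rewrite !mxE. Qed.

End MatrixEntries.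

Lemma sum_ord_if_eqn (V : nmodType) n (g : 'I_n.+1 -> V) m :
  \sum_(k < n.+1) (if (k : nat) == m then g k else 0) = if (m < n.+1)%N then g (inord m) else 0.
Proof.
case: ltnP => [lt_md|le_dm].
  rewrite (bigD1 (inord m)) //= inordK // eqxx big1 ?addr0 // => k.
  by rewrite -val_eqE /= inordK //; case: eqP.
by rewrite big1 // => k _; case: eqP => // km; move: (ltn_ord k); rewrite km ltnNge le_dm.
Qed.

Section PrincipalTriple.
Variables (R : realType) (n : nat).
Local Notation d := n.+1.
Local Notation E := (prinE R d).
Local Notation F := (prinF R d).
Local Notation H := (prinH R d).
Implicit Types X : 'M[R]_d.

Definition fweight i : R := (i * (d - i))%:R.
Definition hweight i : R := n%:R - 2 * i%:R.

Lemma prinE_mull X i j : (E *m X) i j = if (i.+1 < d)%N then X (inord i.+1) j else 0.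
Proof.
rewrite mxE -(sum_ord_if_eqn (X^~ j)); apply: eq_bigr => k _.
by rewrite mxE; case: eqP; rewrite ?mul1r ?mul0r.
Qed.

Lemma prinE_mulr X i j : (X *m E) i j = if (0 < j)%N then X i (inord j.-1) else 0.
Proof.
rewrite mxE; case: (posnP j) => [j0|j_gt0].
  by rewrite big1 // => k _; rewrite mxE j0 mulr0.
have lt_jd : (j.-1 < d)%N by rewrite (leq_ltn_trans (leq_pred j)).
rewrite -(ifT (X i (inord j.-1)) 0 lt_jd) -sum_ord_if_eqn; apply: eq_bigr => k _.
rewrite mxE (_ : _ == _ = ((k : nat) == j.-1)); last by apply/eqP/eqP; lia.
by case: eqP; rewrite ?mulr1 ?mulr0.
Qed.

Lemma prinF_mull X i j :
  (F *m X) i j = if (0 < i)%N then fweight i * X (inord i.-1) j else 0.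
Proof.
rewrite mxE; case: (posnP i) => [i0|i_gt0].
  by rewrite big1 // => k _; rewrite mxE i0 mul0r.
have lt_id : (i.-1 < d)%N by rewrite (leq_ltn_trans (leq_pred i)).
rewrite -(ifT (fweight i * X (inord i.-1) j) 0 lt_id).
rewrite -(sum_ord_if_eqn (fun k => fweight i * X k j)); apply: eq_bigr => k _.
rewrite mxE (_ : _ == _ = ((k : nat) == i.-1)); last by apply/eqP/eqP; lia.
by case: eqP => [ki|]; rewrite ?mul0r // /fweight ki prednK.
Qed.

Lemma prinF_mulr X i j :
  (X *m F) i j = if (j.+1 < d)%N then X i (inord j.+1) * fweight j.+1 else 0.
Proof.
rewrite mxE -(sum_ord_if_eqn (fun k => X i k * fweight j.+1)); apply: eq_bigr => k _.
by rewrite mxE; case: eqP; rewrite ?mulr0.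
Qed.

Lemma prinH_mull X i j : (H *m X) i j = hweight i * X i j.
Proof.
rewrite mxE (bigD1 i) //= big1 ?addr0 => [|k /negbTE ki]; last by rewrite mxE eq_sym ki mul0r.
by rewrite mxE eqxx /hweight -natr1 addrK.
Qed.

Lemma prinH_mulr X i j : (X *m H) i j = X i j * hweight j.
Proof.
rewrite mxE (bigD1 j) //= big1 ?addr0 => [|k /negbTE kj]; last by rewrite mxE kj mulr0.
by rewrite mxE eqxx /hweight -natr1 addrK.
Qed.

Ltac nat_ifs := repeat first [rewrite inordK; [|lia] | case: ifP => /= ?].

Ltac entry_arith i j :=
  rewrite /fweight ?/hweight;
  first [ have -> : j = i by lia | have -> : j = i.+1 by lia | have -> : i = j.+1 by lia | idtac ];
  first [ have -> : i = 0%N by lia | have -> : i = n by lia | idtac ];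
  rewrite ?natrM ?natrB; try lia; rewrite -?natr1;
  first [ have -> : (n%:R : R) = 0 by have -> : n = 0%N by lia | idtac ];
  ring.

Lemma prin_ad_EF : ad E F = H.
Proof.
rewrite /ad -!mulmxE; apply/matrixP => i j; rewrite entryB prinE_mull prinF_mull !mxE -val_eqE.
case: i j => [i lt_id] [j lt_jd] /=; nat_ifs; try lia.
all: entry_arith i j.
Qed.

Lemma prin_ad_HE : ad H E = 2 *: E.
Proof.
rewrite /ad -!mulmxE; apply/matrixP => i j; rewrite entryB prinH_mull prinH_mulr entryZ !mxE.
case: i j => [i lt_id] [j lt_jd] /=; nat_ifs; try lia.
all: entry_arith i j.
Qed.

Lemma prin_ad_HF : ad H F = (-2) *: F.
Proof.
rewrite /ad -!mulmxE; apply/matrixP => i j; rewrite entryB prinH_mull prinH_mulr entryZ !mxE.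
case: i j => [i lt_id] [j lt_jd] /=; nat_ifs; try lia.
all: entry_arith i j.
Qed.

Lemma prin_casimir_diag X i : (i < d)%N ->
  let y k := X (inord k) (inord k) in
  (ad E (ad F X) + ad F (ad E X)) (inord i) (inord i) =
  2 * (fweight i.+1 * (y i - y i.+1) - fweight i * (y i.-1 - y i)).
Proof.
move=> lt_id y; rewrite /y /ad -!mulmxE.
repeat first [ rewrite !(entryD, entryB, entryN, prinE_mull, prinE_mulr, prinF_mull, prinF_mulr)
              | rewrite inordK; [|lia] | rewrite prednK; [|lia] | case: ifP => /= ? ]; try lia.
all: entry_arith i i.
Qed.

Definition antitr X : 'M[R]_d := \matrix_(i, j) X (rev_ord j) (rev_ord i).

Lemma antitr1 : antitr 1 = 1.
Proof. by apply/matrixP => i j; rewrite !mxE (inj_eq rev_ord_inj) eq_sym. Qed.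

Lemma antitrB : {morph antitr : X Y / X - Y}.
Proof. by move=> X Y; apply/matrixP => i j; rewrite !mxE. Qed.

Lemma antitrM X Y : antitr (X * Y) = antitr Y * antitr X.
Proof.
apply/matrixP => i j; rewrite -!mulmxE !mxE (reindex_inj rev_ord_inj).
by apply: eq_bigr => k _; rewrite !mxE mulrC.
Qed.

Lemma antitr_prinE : antitr E = E.
Proof. by apply/matrixP => -[i lt_id] [j lt_jd]; rewrite !mxE /=; do 2 case: eqP => //; lia. Qed.

Lemma antitr_prinF : antitr F = F.
Proof.
apply/matrixP => -[i lt_id] [j lt_jd]; rewrite !mxE /=; do 2 case: eqP => //; try lia.
by move=> ji _; rewrite mulnC; congr (_ * _)%:R; lia.
Qed.

Lemma antitr_diag X i : (i < d)%N ->
  antitr X (inord i) (inord i) = X (inord (n - i)) (inord (n - i)).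
Proof.
move=> lt_id; rewrite mxE (_ : rev_ord _ = inord (n - i)) //.
by apply: val_inj; rewrite /= !inordK //; lia.
Qed.

Lemma kostant_genE e : kostant_gen R d e = fstring E F e e.
Proof.
rewrite /kostant_gen /fstring (@eq_iter _ _ (ad F)) => [|X]; last by rewrite /adF /ad !mulmxE.
by congr iter; elim: e => //= e ->; rewrite mulmxE exprS.
Qed.

Definition kostant_diag e i : R := kostant_gen R d e (inord i) (inord i).

Lemma kostant_diag_rec e : casimir_rec n (e%:R * (e%:R + 1)) (kostant_diag e).
Proof.
move=> i lt_in; have := prin_casimir_diag (kostant_gen R d e) (ltnW lt_in).
rewrite kostant_genE (casimir_fstring prin_ad_EF prin_ad_HE prin_ad_HF) -kostant_genE.
rewrite entryZ /fweight /kostant_diag !natrM !natrB; [|lia|lia].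
by rewrite -!natr1 => h; lra.
Qed.

Lemma kostant_diag_sym e i :
  (i <= n)%N -> kostant_diag e (n - i) = (-1) ^+ e * kostant_diag e i.
Proof.
move=> le_in; rewrite /kostant_diag -antitr_diag ?ltnS // kostant_genE.
by rewrite (tau_fstring antitr1 antitrB antitrM antitr_prinE antitr_prinF) entryZ.
Qed.

Lemma diag_at_inord X k : (0 < k <= d)%N -> diag_at X k = X (inord k.-1) (inord k.-1).
Proof.
move=> /andP[k_gt0 le_kd]; rewrite /diag_at.
case: insubP => [i _ ik|]; last by rewrite prednK // le_kd.
by rewrite (_ : i = inord k.-1) //; apply: val_inj; rewrite /= ik inordK // prednK.
Qed.

Lemma sigma_kostant_gen e j :
  (0 < j < d)%N -> sigma j (kostant_gen R d e) = kostant_diag e j.-1 - kostant_diag e j.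
Proof.
move=> /andP[j_gt0 lt_jd].
by rewrite /sigma !diag_at_inord /= ?j_gt0 ?(ltnW lt_jd) ?lt_jd.
Qed.

End PrincipalTriple.

Section KostantDiagonal.
Variables (R : realType) (n : nat).
Local Notation kdiag := (kostant_diag R n).

Lemma kostant_diag_even_mid e m : n.+1 = (2 * m)%N -> ~~ odd e -> kdiag e m.-1 = kdiag e m.
Proof.
move=> dm even_e; have := @kostant_diag_sym R n e m.-1 ltac:(lia).
by rewrite (_ : (n - m.-1)%N = m); [rewrite -signr_odd (negbTE even_e) mul1r => -> | lia].
Qed.

Lemma kostant_diag_pronic e : n = (e * (e + 1) %/ 2)%N -> (2 <= n)%N -> kdiag e 1 = kdiag e 2.
Proof.
move=> ne le2n; apply: (casimir_rec_y1_y2 le2n).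
have e2n : (e * (e + 1) = 2 * n)%N by rewrite ne [RHS]mulnC divnK // dvdn2 oddM addn1 /= andbN.
have -> : (2 * n%:R : R) = e%:R * (e%:R + 1) by rewrite natr1 -!natrM -e2n addn1.
exact: kostant_diag_rec.
Qed.

Lemma kostant_diag_odd_mid m : (1 <= m)%N -> n = (4 * m + 2)%N ->
  kdiag (2 * m + 1) (2 * m).-1 = kdiag (2 * m + 1) (2 * m).
Proof.
move=> m_gt0 nm; set i := (2 * m).-1.
have -> : (2 * m = i.+1)%N by rewrite /i prednK //; lia.
have -> : (i.+1 + 1 = i.+2)%N by rewrite addn1.
apply: (casimir_rec_mid (i := i)).
  rewrite -(@natr1 R i.+2) (_ : (2 * i + 4 = n)%N); last by lia.
  exact: kostant_diag_rec.
have := @kostant_diag_sym R n i.+2 i.+2 ltac:(lia).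
rewrite (_ : (n - i.+2 = i.+2)%N); last by lia.
have -> : i.+2 = (2 * m).+1 by rewrite /i -addn2 -subn1; lia.
by rewrite -signr_odd /= mul2n odd_double expr1 mulN1r => h; lra.
Qed.

Lemma kostant_diag_step_poly e (P : R -> R) j :
  casimir_recR n (e%:R * (e%:R + 1)) P -> P 0 != 0 -> (0 < j <= n)%N ->
  P (j%:R - 1) = P j%:R -> kdiag e j.-1 = kdiag e j.
Proof.
move=> Peq P0 /andP[j_gt0 le_jn] Pj; rewrite -[in RHS](prednK j_gt0).
apply: (casimir_rec_step_poly Peq (@kostant_diag_rec R n e) P0); first by rewrite prednK.
by rewrite prednK // -subn1 natrB.
Qed.

Lemma kostant_diag_cubic j : (3 <= n)%N -> (0 < j <= n)%N -> qform_e3 n.+1 j = 4 ->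
  kdiag 3 j.-1 = kdiag 3 j.
Proof.
move=> le3n le_jn /(congr1 (fun z : int => z%:~R : R)).
rewrite /qform_e3 /= !(intrD, intrM, intrN) -!pmulrn -natr1 => hQ.
apply: (kostant_diag_step_poly (@dcheb3_rec R n) (@dcheb3_0_neq0 R n le3n) le_jn).
have hQ0 : (n%:R + 1) ^+ 2 - 5 * (n%:R + 1 - 2 * j%:R) ^+ 2 - 4 = 0 :> R by lra.
by apply/eqP; rewrite -subr_eq0 dcheb3_step hQ0 mulr0.
Qed.

Lemma kostant_diag_quartic j : (4 <= n)%N -> (0 < j <= n)%N -> qform_e4 n.+1 j = 20 ->
  kdiag 4 j.-1 = kdiag 4 j.
Proof.
move=> le4n le_jn /(congr1 (fun z : int => z%:~R : R)).
rewrite /qform_e4 /= !(intrD, intrM, intrN) -!pmulrn -natr1 => hQ.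
apply: (kostant_diag_step_poly (@dcheb4_rec R n) (@dcheb4_0_neq0 R n le4n) le_jn).
have hQ0 : 3 * (n%:R + 1) ^+ 2 - 7 * (n%:R + 1 - 2 * j%:R) ^+ 2 - 20 = 0 :> R by lra.
by apply/eqP; rewrite -subr_eq0 dcheb4_step hQ0 mulr0.
Qed.

End KostantDiagonal.

Theorem mainTheorem15 (R : realType) (d e j : nat) :
  (2 <= d)%N -> (1 <= e <= d - 1)%N -> (1 <= j < d)%N ->
  ((exists n : nat, [/\ d = (2 * n)%N, ~~ odd e & j = n]) \/
   (j = 2%N /\ d = (1 + e * (e + 1) %/ 2)%N) \/
   (exists m : nat, [/\ (1 <= m)%N, d = (4 * m + 3)%N, e = (2 * m + 1)%N
                      & j = (2 * m)%N]) \/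
   (e = 3%N /\ exists k : nat, orbit_pt (mx22 4 (-5) 1 (-1)) k 7 2 d j) \/
   (e = 4%N /\ exists k : nat,
       orbit_pt (mx22 6 (-7) 1 (-1)) k 11 2 d j \/
       orbit_pt (mx22 6 (-7) 1 (-1)) k 17 3 d j)) ->
  forall a : 'M[R]_d, kostant_line e a -> sigma j a = 0.
Proof.
case: d => [//|n] _ /andP[_ le_en] /andP[j_gt0 lt_jd] cases _ [c ->].
rewrite sigmaZ sigma_kostant_gen ?j_gt0 //.
suff -> : kostant_diag R n e j.-1 = kostant_diag R n e j by rewrite subrr mulr0.
case: cases => [[m [dm even_e ->]] | [[j2 dn] | [[m [m_gt0 dm -> ->]] |
                [[e3 [k orb]] | [e4 [k [orb|orb]]]]]]].
- exact: kostant_diag_even_mid dm even_e.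
- by subst j; apply: kostant_diag_pronic; [move: dn; rewrite add1n => -[] | lia].
- by apply: kostant_diag_odd_mid; lia.
- subst e; apply: kostant_diag_cubic; [lia | lia |].
  by rewrite (orbit_pt_invariant qform_e3_invariant orb).
- subst e; apply: kostant_diag_quartic; [lia | lia |].
  by rewrite (orbit_pt_invariant qform_e4_invariant orb).
- subst e; apply: kostant_diag_quartic; [lia | lia |].
  by rewrite (orbit_pt_invariant qform_e4_invariant orb).
Qed.
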